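(* Let $(X,V)=(X(t),V(t))_{t\ge0}$ be the global solution of the continuous Motsch–Tadmor model and, for each admissible time-step $h>0$, let $(X^h,V^h)=(X^h(n),V^h(n))_{n\ge0}$ be the solution of the discrete Motsch–Tadmor model with time-step $h$, both with the same initial data $(X^h(0),V^h(0))=(X(0),V(0))$ (all as described in the context, under the standing assumptions there). Assume that $\mathcal{D}(V(0))\le \kappa\int_{\mathcal{D}(X(0))}^{\infty} a(s)\,ds$, and that \[ \|\Delta^x(0)\|_F<M \quad\text{and}\quad \|\Delta^v(0)\|_F<\kappa\int_{\|\Delta^x(0)\|_F}^{M}\psi(s)\,ds . \] Then there is a constant $c_0=c_0(\kappa,N,a)$, independent of $n$ and $h$, such that \[ \limsup_{h\to0}\ \sup_{0\le n<\infty}\|\Delta^{x,h}(n)-\Delta^x(nh)\|_F\le c_0\,\mathcal{D}(V(0)),\qquad \limsup_{h\to0}\ \sup_{0\le n<\infty}\|V^h(n)-V(nh)\|=0 . \]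
   Context: Fix integers $N\ge1$, $d\ge1$, coupling strength $\kappa>0$ and a communication function $a:[0,\infty)\to\mathbb{R}$ with constants $0<c_1\le c_2$ such that $c_1\le a(r)\le c_2$ for all $r\ge0$ and $a$ Lipschitz with constant $L_a>0$. Time-steps are always taken with $0<h<\min\{1,1/\kappa\}$. Continuous MT model: $\dot x_i=v_i$, $\dot v_i=\kappa\sum_{j=1}^N\phi_{ij}(v_j-v_i)$, $i=1,\dots,N$, with $\phi_{ij}=\frac{a(\|x_i-x_j\|)}{\sum_{k=1}^N a(\|x_i-x_k\|)}$ ($\|\cdot\|$ Euclidean on $\mathbb{R}^d$). Discrete MT model with step $h$: $x^h_i(n+1)=x^h_i(n)+hv^h_i(n)$, $v^h_i(n+1)=v^h_i(n)+h\kappa\sum_{j=1}^N\phi^h_{ij}(n)(v^h_j(n)-v^h_i(n))$, with $\phi^h_{ij}(n)=\frac{a(\|x^h_i(n)-x^h_j(n)\|)}{\sum_k a(\|x^h_i(n)-x^h_k(n)\|)}$. Notation: $X=(x_1,\dots,x_N)$, $V=(v_1,\dots,v_N)$, $\|V\|$ the Euclidean norm on $(\mathbb{R}^d)^N$; $\mathcal{D}(X)=\max_{i,j}\|x_i-x_j\|$, $\mathcal{D}(V)=\max_{i,j}\|v_i-v_j\|$; $\Delta^x_{ij}=x_i-x_j$, $\Delta^v_{ij}=v_i-v_j$, $\|\Delta^x\|_F=(\sum_{i,j}\|\Delta^x_{ij}\|^2)^{1/2}$, $\|\Delta^v\|_F$ likewise; $\Delta^{x,h}(n)$ is the matrix $[x^h_i(n)-x^h_j(n)]$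 and $\Delta^x(nh)$ is $[x_i(nh)-x_j(nh)]$. Constants: $\|\phi\|_{\mathrm{Lip}}=\frac{L_a}{Nc_1}(1+\frac{c_2}{c_1})$, $M=\frac{1}{4N\|\phi\|_{\mathrm{Lip}}}$, $\psi(s)=1-\|\phi\|_{\mathrm{Lip}}Ns$. *)

From Stdlib Require Import Reals Lra.
From Coquelicot Require Import Coquelicot.
Open Scope R_scope.

(* A configuration: agent index i (< N) and coordinate k (< d) -> real.
   So x i : R^d is the position (or velocity) of agent i. *)
Definition config := nat -> nat -> R.

Fixpoint sumR (n : nat) (f : nat -> R) : R :=
  match n with
  | O => 0
  | S m => sumR m f + f m
  end.

Fixpoint maxR (n : nat) (f : nat -> R) : R :=
  match n with
  | O => 0
  | S m => Rmax (maxR m f) (f m)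
  end.

Definition enorm (d : nat) (u : nat -> R) : R := sqrt (sumR d (fun k => (u k)^2)).

Definition dist_ij (d : nat) (x : config) (i j : nat) : R :=
  enorm d (fun k => x i k - x j k).

Definition diam (N d : nat) (x : config) : R :=
  maxR N (fun i => maxR N (fun j => dist_ij d x i j)).

Definition fro (N d : nat) (x : config) : R :=
  sqrt (sumR N (fun i => sumR N (fun j => (dist_ij d x i j)^2))).

Definition fro_diff (N d : nat) (x' x : config) : R :=
  sqrt (sumR N (fun i => sumR N (fun j =>
     sumR d (fun k => ((x' i k - x' j k) - (x i k - x j k))^2)))).

Definition full_norm_diff (N d : nat) (v' v : config) : R :=
  sqrt (sumR N (fun i => sumR d (fun k => (v' i k - v i k)^2))).

Definition mt_weight (N d : nat) (a : R -> R) (x : config) (i j : nat) : R :=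
  a (dist_ij d x i j) / sumR N (fun l => a (dist_ij d x i l)).

Definition mt_force (N d : nat) (kappa : R) (a : R -> R) (x v : config) (i k : nat) : R :=
  kappa * sumR N (fun j => mt_weight N d a x i j * (v j k - v i k)).

Fixpoint mt_discrete (N d : nat) (kappa : R) (a : R -> R) (h : R)
    (x0 v0 : config) (n : nat) : config * config :=
  match n with
  | O => (x0, v0)
  | S m =>
      let (x, v) := mt_discrete N d kappa a h x0 v0 m in
      ((fun i k => x i k + h * v i k),
       (fun i k => v i k + h * mt_force N d kappa a x v i k))
  end.

Definition phi_lip (N : nat) (La c1 c2 : R) : R := La / (INR N * c1) * (1 + c2 / c1).
Definition M_const (N : nat) (La c1 c2 : R) : R := 1 / (4 * INR N * phi_lip N La c1 c2).
Definition psi_fun (N : nat) (La c1 c2 : R) (s : R) : R := 1 - phi_lip N La c1 c2 * INR N * s.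

Definition mt_solution (N d : nat) (kappa : R) (a : R -> R) (X V : R -> config) : Prop :=
  (forall i k, (i < N)%nat -> (k < d)%nat ->
     forall t, 0 < t ->
       is_derive (fun s => X s i k) t (V t i k) /\
       is_derive (fun s => V s i k) t (mt_force N d kappa a (X t) (V t) i k)) /\
  (forall i k, (i < N)%nat -> (k < d)%nat ->
     filterlim (fun s => X s i k) (at_right 0) (locally (X 0 i k)) /\
     filterlim (fun s => V s i k) (at_right 0) (locally (V 0 i k))).

(** Since [a >= c1 > 0] everywhere, every weight [phi_ij] is at least [c1 / (N c2)].  One
    explicit Euler step therefore replaces each velocity coordinate by a combination of the old
    ones that contracts their range by [rho = 1 - h kappa c1 / c2], whatever the positions are.
    So the discrete velocity spread is at most [rho^n * 2 D(V(0)) <= exp (-kappa (c1/c2) n h) *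
    2 D(V(0))], which bounds, uniformly in [h], both the drift of the relative positions (by
    [2 D(V(0)) / (kappa c1/c2)]) and the tails [|V^h(n+p) - V^h(n)|].  On a bounded time
    interval the Euler scheme converges with error [O(h)] (mean value theorem and discrete
    Gronwall), so evaluating the scheme on ever finer grids transfers these bounds to the
    continuous solution.  The position estimate then follows from the two drift bounds, and the
    velocity estimate from the [O(h)] error up to a time after which both tails are small. *)

From Stdlib Require Import Reals Lra Lia.
From Coquelicot Require Import Coquelicot.
Open Scope R_scope.

(** * Finite sums, maxima and norms *)

Lemma sumR_ext n f g : (forall i, (i < n)%nat -> f i = g i) -> sumR n f = sumR n g.
Proof.
  induction n as [|n IH]; intros Hfg; simpl; [reflexivity|].
  rewrite IH, Hfg; [reflexivity|lia|intros; apply Hfg; lia].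
Qed.

Lemma sumR_le n f g : (forall i, (i < n)%nat -> f i <= g i) -> sumR n f <= sumR n g.
Proof.
  induction n as [|n IH]; intros Hfg; simpl; [lra|].
  apply Rplus_le_compat; [apply IH; intros; apply Hfg|apply Hfg]; lia.
Qed.

Lemma sumR_const n c : sumR n (fun _ => c) = INR n * c.
Proof. induction n as [|n IH]; simpl sumR; [simpl; ring|]. rewrite IH, S_INR; ring. Qed.

Lemma sumR_plus n f g : sumR n (fun i => f i + g i) = sumR n f + sumR n g.
Proof. induction n as [|n IH]; simpl; [ring|]. rewrite IH; ring. Qed.

Lemma sumR_minus n f g : sumR n (fun i => f i - g i) = sumR n f - sumR n g.
Proof. induction n as [|n IH]; simpl; [ring|]. rewrite IH; ring. Qed.

Lemma sumR_scal n c f : sumR n (fun i => c * f i) = c * sumR n f.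
Proof. induction n as [|n IH]; simpl; [ring|]. rewrite IH; ring. Qed.

Lemma sumR_abs n f : Rabs (sumR n f) <= sumR n (fun i => Rabs (f i)).
Proof.
  induction n as [|n IH]; simpl; [rewrite Rabs_R0; lra|].
  eapply Rle_trans; [apply Rabs_triang|lra].
Qed.

Lemma sumR_nonneg n f : (forall i, (i < n)%nat -> 0 <= f i) -> 0 <= sumR n f.
Proof.
  intros Hf. replace 0 with (sumR n (fun _ => 0)) by (rewrite sumR_const; ring).
  now apply sumR_le.
Qed.

Lemma sumR_term_le n f i :
  (forall j, (j < n)%nat -> 0 <= f j) -> (i < n)%nat -> f i <= sumR n f.
Proof.
  induction n as [|n IH]; intros Hf Hi; [lia|simpl].
  destruct (Nat.eq_dec i n) as [->|Hin].
  - assert (0 <= sumR n f) by (apply sumR_nonneg; intros; apply Hf; lia). lra.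
  - assert (f i <= sumR n f) by (apply IH; [intros; apply Hf|]; lia).
    assert (0 <= f n) by (apply Hf; lia). lra.
Qed.

Lemma sumR_weighted_bounds n w v m M :
  (forall j, (j < n)%nat -> 0 <= w j) -> (forall j, (j < n)%nat -> m <= v j <= M) ->
  sumR n w * m <= sumR n (fun j => w j * v j) <= sumR n w * M.
Proof.
  intros Hw Hv. rewrite Rmult_comm, <- sumR_scal, Rmult_comm, <- sumR_scal.
  split; apply sumR_le; intros j Hj; specialize (Hw j Hj); specialize (Hv j Hj); nra.
Qed.

Lemma sumR_le_mul_card n f b : (forall i, (i < n)%nat -> f i <= b) -> sumR n f <= INR n * b.
Proof. intros Hf. rewrite <- sumR_const. now apply sumR_le. Qed.

Lemma maxR_ge n f i : (i < n)%nat -> f i <= maxR n f.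
Proof.
  induction n as [|n IH]; intros Hi; [lia|simpl].
  destruct (Nat.eq_dec i n) as [->|Hin]; [apply Rmax_r|].
  eapply Rle_trans; [apply IH; lia|apply Rmax_l].
Qed.

Lemma maxR_nonneg n f : 0 <= maxR n f.
Proof. induction n; simpl; [lra|]. eapply Rle_trans; [eassumption|apply Rmax_l]. Qed.

Lemma maxR_le n f b : 0 <= b -> (forall i, (i < n)%nat -> f i <= b) -> maxR n f <= b.
Proof.
  intros Hb. induction n as [|n IH]; intros Hf; simpl; [lra|].
  apply Rmax_lub; [apply IH; intros; apply Hf|apply Hf]; lia.
Qed.

Lemma Rabs_sub_le x y : Rabs (x - y) <= Rabs x + Rabs y.
Proof. rewrite <- (Rabs_Ropp y). apply Rabs_triang. Qed.

Lemma sqrt_diff_le A B c : 0 <= A -> 0 <= B -> 0 <= c ->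
  Rabs (A - B) <= c * (sqrt A + sqrt B) -> Rabs (sqrt A - sqrt B) <= c.
Proof.
  intros HA HB Hc HAB.
  pose proof (sqrt_pos A). pose proof (sqrt_pos B).
  destruct (Req_dec (sqrt A + sqrt B) 0) as [Hz|Hz].
  - replace (sqrt A - sqrt B) with 0 by lra. rewrite Rabs_R0; lra.
  - replace (A - B) with ((sqrt A - sqrt B) * (sqrt A + sqrt B)) in HAB
      by (pose proof (sqrt_sqrt A HA); pose proof (sqrt_sqrt B HB); nra).
    rewrite Rabs_mult, (Rabs_right (sqrt A + sqrt B)) in HAB by lra.
    apply Rmult_le_reg_r with (sqrt A + sqrt B); lra.
Qed.

Lemma coord_le_enorm d u k : (k < d)%nat -> Rabs (u k) <= enorm d u.
Proof.
  intros Hk. unfold enorm. rewrite <- sqrt_Rsqr_abs. apply sqrt_le_1_alt.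
  replace (Rsqr (u k)) with ((u k) ^ 2) by (unfold Rsqr; ring).
  apply (sumR_term_le d (fun k => (u k) ^ 2)); auto using pow2_ge_0.
Qed.

Lemma enorm_lip d u w e : (forall k, (k < d)%nat -> Rabs (u k - w k) <= e) ->
  Rabs (enorm d u - enorm d w) <= INR d * e.
Proof.
  intros Hk. destruct d as [|d].
  - unfold enorm; simpl. rewrite Rminus_diag, Rabs_R0; lra.
  - assert (He : 0 <= e) by (eapply Rle_trans; [apply Rabs_pos|apply (Hk 0%nat); lia]).
    apply sqrt_diff_le; try (apply sumR_nonneg; intros; apply pow2_ge_0).
    { pose proof (pos_INR (S d)); nra. }
    rewrite <- sumR_minus. eapply Rle_trans; [apply sumR_abs|].
    replace (INR (S d) * e * _) with (sumR (S d) (fun _ => e * (enorm (S d) u + enorm (S d) w)))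
      by (rewrite sumR_const; unfold enorm; ring).
    apply sumR_le. intros k Hkd.
    pose proof (coord_le_enorm (S d) u k Hkd). pose proof (coord_le_enorm (S d) w k Hkd).
    replace ((u k) ^ 2 - (w k) ^ 2) with ((u k - w k) * (u k + w k)) by ring.
    rewrite Rabs_mult. pose proof (Rabs_triang (u k) (w k)).
    apply Rmult_le_compat; auto using Rabs_pos; lra.
Qed.

Lemma dist_le_diam N d x i j : (i < N)%nat -> (j < N)%nat -> dist_ij d x i j <= diam N d x.
Proof.
  intros Hi Hj. eapply Rle_trans; [|apply (maxR_ge _ _ i Hi)].
  apply (maxR_ge _ (fun j => dist_ij d x i j) j Hj).
Qed.

Lemma diam_nonneg N d x : 0 <= diam N d x.
Proof. apply maxR_nonneg. Qed.

Lemma coord_le_diam N d x i j k : (i < N)%nat -> (j < N)%nat -> (k < d)%nat ->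
  Rabs (x i k - x j k) <= diam N d x.
Proof.
  intros Hi Hj Hk. eapply Rle_trans; [|apply (dist_le_diam N d x i j Hi Hj)].
  apply (coord_le_enorm d (fun k => x i k - x j k)), Hk.
Qed.

Lemma Rabs_div_sub_le p q p' q' Q P al be : 0 < Q -> Q <= q -> Q <= q' ->
  Rabs p' <= P -> Rabs (p - p') <= al -> Rabs (q - q') <= be ->
  Rabs (p / q - p' / q') <= al / Q + P * be / (Q * Q).
Proof.
  intros HQ Hq Hq' Hp' Hp Hq''.
  replace (p / q - p' / q') with ((p - p') / q + p' * (q' - q) / (q * q')) by (field; lra).
  eapply Rle_trans; [apply Rabs_triang|]. apply Rplus_le_compat.
  - rewrite Rabs_div, (Rabs_right q) by lra. unfold Rdiv.
    apply Rmult_le_compat; auto using Rabs_pos.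
    + apply Rlt_le, Rinv_0_lt_compat; lra.
    + apply Rinv_le_contravar; lra.
  - rewrite Rabs_div, Rabs_mult, Rabs_minus_sym, (Rabs_right (q * q')) by nra. unfold Rdiv.
    apply Rmult_le_compat.
    + apply Rmult_le_pos; apply Rabs_pos.
    + apply Rlt_le, Rinv_0_lt_compat; nra.
    + apply Rmult_le_compat; auto using Rabs_pos.
    + apply Rinv_le_contravar; [nra|apply Rmult_le_compat; lra].
Qed.

Lemma sqrt_le_sqrt_mul s K b : 0 <= K -> 0 <= b -> s <= K * b ^ 2 -> sqrt s <= sqrt K * b.
Proof.
  intros HK Hb Hs. rewrite <- (sqrt_pow2 b Hb), <- sqrt_mult_alt by exact HK.
  now apply sqrt_le_1_alt.
Qed.

Lemma pow2_le_of_Rabs_le x b : Rabs x <= b -> x ^ 2 <= b ^ 2.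
Proof. intros H. rewrite <- (pow2_abs x). apply pow_incr. split; [apply Rabs_pos|exact H]. Qed.

Lemma fro_diff_le N d x' x b : 0 <= b ->
  (forall i j k, (i < N)%nat -> (j < N)%nat -> (k < d)%nat ->
     Rabs ((x' i k - x' j k) - (x i k - x j k)) <= b) ->
  fro_diff N d x' x <= sqrt (INR N * (INR N * INR d)) * b.
Proof.
  intros Hb Hx. pose proof (pos_INR N). pose proof (pos_INR d).
  apply sqrt_le_sqrt_mul; [nra|exact Hb|].
  rewrite !Rmult_assoc. apply sumR_le_mul_card. intros i Hi.
  apply sumR_le_mul_card. intros j Hj. apply sumR_le_mul_card. intros k Hk.
  apply pow2_le_of_Rabs_le, Hx; assumption.
Qed.

Lemma full_norm_diff_le N d v' v b : 0 <= b ->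
  (forall i k, (i < N)%nat -> (k < d)%nat -> Rabs (v' i k - v i k) <= b) ->
  full_norm_diff N d v' v <= sqrt (INR N * INR d) * b.
Proof.
  intros Hb Hv. apply sqrt_le_sqrt_mul; [apply Rmult_le_pos; apply pos_INR|exact Hb|].
  rewrite Rmult_assoc. apply sumR_le_mul_card. intros i Hi. apply sumR_le_mul_card. intros k Hk.
  apply pow2_le_of_Rabs_le, Hv; assumption.
Qed.

(** * Real analysis *)

Lemma exp_INR_mul n x : exp (INR n * x) = exp x ^ n.
Proof.
  induction n as [|n IH]; [simpl; rewrite Rmult_0_l; apply exp_0|].
  rewrite S_INR, Rmult_plus_distr_r, Rmult_1_l, exp_plus, IH. simpl. ring.
Qed.

(* Extending [f] by [f 0] on the negative reals turns right-continuity at [0] into continuity,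
   so that [MVT_gen] and [continuity_ab_maj] apply on intervals starting at [0]. *)
Lemma is_derive_Rmax0 (f df : R -> R) t : 0 < t -> is_derive f t (df t) ->
  is_derive (fun s => f (Rmax 0 s)) t (df t).
Proof.
  intros Ht Hd. apply is_derive_ext_loc with f; auto.
  exists (mkposreal t Ht). intros y Hy. change (Rabs (y - t) < t) in Hy.
  apply Rabs_def2 in Hy. now rewrite Rmax_right by lra.
Qed.

Section RightContinuousSolution.

Variables f df : R -> R.
Hypothesis Hderiv : forall t, 0 < t -> is_derive f t (df t).
Hypothesis Hcont0 : filterlim f (at_right 0) (locally (f 0)).

Lemma continuity_pt_Rmax0 t : 0 <= t -> continuity_pt (fun s => f (Rmax 0 s)) t.
Proof.
  intros [Ht| <-].
  - apply continuity_pt_filterlim, (ex_derive_continuous (fun s => f (Rmax 0 s))).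
    exists (df t). now apply is_derive_Rmax0, Hderiv.
  - apply continuity_pt_locally. intros eps.
    destruct (proj1 (filterlim_locally f (f 0)) Hcont0 eps) as [del Hdel].
    exists del. intros y Hy. rewrite (Rmax_left 0 0) by lra.
    destruct (Rle_lt_dec y 0) as [Hy0|Hy0].
    + rewrite Rmax_left, Rminus_diag, Rabs_R0 by lra. apply cond_pos.
    + rewrite Rmax_right by lra. now apply Hdel.
Qed.

Lemma mvt_right_cont s t : 0 <= s <= t -> exists c, s <= c <= t /\ f t - f s = df c * (t - s).
Proof.
  intros Hst.
  destruct (MVT_gen (fun s => f (Rmax 0 s)) s t df) as (c & Hc & Heq).
  - intros x Hx. rewrite Rmin_left, Rmax_right in Hx by lra.
    apply is_derive_Rmax0, Hderiv; lra.
  - intros x Hx. rewrite Rmin_left, Rmax_right in Hx by lra. apply continuity_pt_Rmax0; lra.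
  - rewrite Rmin_left, Rmax_right in Hc by lra. exists c. split; auto.
    now rewrite (Rmax_right 0 t), (Rmax_right 0 s) in Heq by lra.
Qed.

Lemma increment_le s t B : 0 <= s <= t -> (forall c, s <= c <= t -> Rabs (df c) <= B) ->
  Rabs (f t - f s) <= B * (t - s).
Proof.
  intros Hst HB. destruct (mvt_right_cont s t Hst) as (c & Hc & ->).
  rewrite Rabs_mult, (Rabs_right (t - s)) by lra.
  apply Rmult_le_compat_r; [lra|auto].
Qed.

Lemma bounded_on_compact T : 0 <= T -> exists b, forall t, 0 <= t <= T -> Rabs (f t) <= b.
Proof.
  intros HT.
  destruct (continuity_ab_maj (fun s => Rabs (f (Rmax 0 s))) 0 T HT) as (t0 & Ht0 & _).
  - intros c Hc. apply (continuity_pt_comp (fun s => f (Rmax 0 s)) Rabs).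
    + apply continuity_pt_Rmax0; lra.
    + apply Rcontinuity_abs.
  - exists (Rabs (f (Rmax 0 t0))). intros t Ht. specialize (Ht0 t Ht). simpl in Ht0.
    now rewrite Rmax_right in Ht0 by lra.
Qed.

End RightContinuousSolution.

Lemma bound_finite_family (n : nat) (P : nat -> R -> Prop) :
  (forall i b b', b <= b' -> P i b -> P i b') ->
  (forall i, (i < n)%nat -> exists b, P i b) -> exists b, 0 <= b /\ forall i, (i < n)%nat -> P i b.
Proof.
  intros Hmono. induction n as [|n IH]; intros Hex.
  - exists 0. split; [lra|]. intros; lia.
  - destruct IH as (b & Hb & Hbi); [intros; apply Hex; lia|].
    destruct (Hex n ltac:(lia)) as (bn & Hbn).
    exists (Rmax b bn). split; [eapply Rle_trans; [apply Hb|apply Rmax_l]|].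
    intros i Hi. destruct (Nat.eq_dec i n) as [->|Hin].
    + eapply Hmono; [apply Rmax_r|auto].
    + eapply Hmono; [apply Rmax_l|apply Hbi; lia].
Qed.

Lemma discrete_gronwall (e : nat -> R) h L C n : 0 <= h -> 0 <= L -> 0 <= C -> e 0%nat <= 0 ->
  (forall m, (m < n)%nat -> e (S m) <= (1 + h * L) * e m + h ^ 2 * C) ->
  e n <= INR n * h * (h * C) * exp (L * (INR n * h)).
Proof.
  intros Hh HL HC He0 Hstep.
  assert (Hpow : e n <= INR n * h ^ 2 * C * (1 + h * L) ^ n).
  { induction n as [|n IH]; [simpl; lra|].
    assert (IHn : e n <= INR n * h ^ 2 * C * (1 + h * L) ^ n)
      by (apply IH; intros; apply Hstep; lia).
    eapply Rle_trans; [apply Hstep; lia|].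
    assert (Hq : 1 <= (1 + h * L) ^ n) by (apply pow_R1_Rle; nra).
    assert (HA : 0 <= h ^ 2 * C) by (apply Rmult_le_pos; [apply pow2_ge_0|lra]).
    replace (INR (S n) * h ^ 2 * C * (1 + h * L) ^ S n)
      with ((1 + h * L) * (INR n * h ^ 2 * C * (1 + h * L) ^ n)
            + h ^ 2 * C * ((1 + h * L) * (1 + h * L) ^ n)) by (rewrite S_INR; simpl; ring).
    apply Rplus_le_compat; [apply Rmult_le_compat_l; nra|].
    rewrite <- (Rmult_1_r (h ^ 2 * C)) at 1. apply Rmult_le_compat_l; [lra|].
    apply Rle_trans with (1 * 1); [lra|apply Rmult_le_compat; nra]. }
  eapply Rle_trans; [apply Hpow|].
  replace (INR n * h ^ 2 * C) with (INR n * h * (h * C)) by ring.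
  apply Rmult_le_compat_l; [pose proof (pos_INR n); apply Rmult_le_pos; nra|].
  replace (L * (INR n * h)) with (INR n * (h * L)) by ring. rewrite exp_INR_mul.
  apply pow_incr. split; [nra|apply exp_ineq1_le].
Qed.

Lemma exists_grid_index y h : 0 <= y -> 0 < h -> exists m : nat, INR m * h <= y < INR m * h + h.
Proof.
  intros Hy Hh. destruct (INR_unbounded (y / h)) as [K HK].
  assert (HK' : y < INR K * h).
  { apply Rmult_lt_reg_r with (/ h); [apply Rinv_0_lt_compat; lra|].
    rewrite Rmult_assoc, Rinv_r by lra. unfold Rdiv in HK. lra. }
  clear HK. induction K as [|K IH]; [simpl in HK'; lra|].
  destruct (Rlt_le_dec y (INR K * h)); auto.
  exists K. rewrite S_INR in HK'. lra.
Qed.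

Lemma exists_fine_subdivision h eps : 0 < h -> 0 < eps ->
  exists K : nat, (0 < K)%nat /\ h / INR K < eps.
Proof.
  intros Hh He. destruct (INR_unbounded (h / eps)) as [K HK].
  assert (0 < h / eps) by (apply Rdiv_lt_0_compat; auto).
  assert (HK0 : 0 < INR K) by lra.
  exists K. split; [apply INR_lt; simpl; lra|].
  apply Rmult_lt_reg_r with (INR K); auto. unfold Rdiv in *.
  rewrite Rmult_assoc, Rinv_l, Rmult_1_r by lra.
  apply Rmult_lt_reg_r with (/ eps); [apply Rinv_0_lt_compat; lra|].
  rewrite (Rmult_comm eps), Rmult_assoc, Rinv_r by lra. lra.
Qed.

Lemma exp_decay_eventually_le Q c b : 0 <= Q -> 0 < c -> 0 < b ->
  exists T, 0 <= T /\ forall y, T <= y -> Q * exp (- c * y) <= b.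
Proof.
  intros HQ Hc Hb. exists (Q / (b * c)).
  assert (HT : 0 <= Q / (b * c)) by (apply Rmult_le_pos; [lra|apply Rlt_le, Rinv_0_lt_compat; nra]).
  split; [exact HT|]. intros y Hy.
  assert (Hexp : 1 + c * y <= exp (c * y)) by apply exp_ineq1_le.
  pose proof (exp_pos (c * y)).
  replace (exp (- c * y)) with (/ exp (c * y)) by (rewrite <- exp_Ropp; f_equal; ring).
  apply Rmult_le_reg_r with (exp (c * y)); auto.
  rewrite Rmult_assoc, Rinv_l, Rmult_1_r by lra.
  assert (Q <= b * c * y).
  { replace Q with (b * c * (Q / (b * c))) by (field; lra). apply Rmult_le_compat_l; nra. }
  nra.
Qed.

(** * The Motsch-Tadmor model *)

Section MotschTadmor.

Variables (N d : nat) (kappa : R) (a : R -> R) (c1 c2 La : R).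
Hypothesis HN : (1 <= N)%nat.
Hypothesis Hk : 0 < kappa.
Hypothesis Hc1 : 0 < c1.
Hypothesis Hc12 : c1 <= c2.
Hypothesis HLa : 0 < La.
Hypothesis Ha : forall r, 0 <= r -> c1 <= a r <= c2.
Hypothesis HaL : forall r s, 0 <= r -> 0 <= s -> Rabs (a r - a s) <= La * Rabs (r - s).

Let HNpos : 0 < INR N.
Proof. apply lt_0_INR; lia. Qed.

Lemma dist_ij_nonneg x i j : 0 <= dist_ij d x i j.
Proof. apply sqrt_pos. Qed.

Lemma mt_denom_bounds x i :
  INR N * c1 <= sumR N (fun l => a (dist_ij d x i l)) <= INR N * c2.
Proof. rewrite <- !sumR_const. split; apply sumR_le; intros; apply Ha, dist_ij_nonneg. Qed.

Definition weight_lb := c1 / (INR N * c2).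

Lemma N_weight_lb : INR N * weight_lb = c1 / c2.
Proof. unfold weight_lb. field. lra. Qed.

Lemma mt_weight_ge x i j : weight_lb <= mt_weight N d a x i j.
Proof.
  unfold weight_lb, mt_weight. pose proof (mt_denom_bounds x i).
  pose proof (Ha _ (dist_ij_nonneg x i j)). unfold Rdiv.
  apply Rmult_le_compat; try lra; [apply Rlt_le, Rinv_0_lt_compat; nra|].
  apply Rinv_le_contravar; nra.
Qed.

Lemma mt_weight_nonneg x i j : 0 <= mt_weight N d a x i j.
Proof.
  eapply Rle_trans; [|apply mt_weight_ge].
  unfold weight_lb. apply Rlt_le, Rdiv_lt_0_compat; nra.
Qed.

Lemma sumR_mt_weight x i : sumR N (fun j => mt_weight N d a x i j) = 1.
Proof.
  pose proof (mt_denom_bounds x i). unfold mt_weight, Rdiv.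
  rewrite (sumR_ext _ _ (fun j => / sumR N (fun l => a (dist_ij d x i l)) * a (dist_ij d x i j)))
    by (intros; ring).
  rewrite sumR_scal. field. nra.
Qed.

Lemma mt_force_alt x v i k : mt_force N d kappa a x v i k =
  kappa * (sumR N (fun j => mt_weight N d a x i j * v j k) - v i k).
Proof.
  unfold mt_force. f_equal.
  rewrite (sumR_ext _ _ (fun j => mt_weight N d a x i j * v j k - v i k * mt_weight N d a x i j))
    by (intros; ring).
  rewrite sumR_minus, sumR_scal, sumR_mt_weight. ring.
Qed.

Lemma mt_force_abs_le x v s i k : (forall j, (j < N)%nat -> Rabs (v j k - v i k) <= s) ->
  Rabs (mt_force N d kappa a x v i k) <= kappa * s.
Proof.
  intros Hs. unfold mt_force. rewrite Rabs_mult, (Rabs_right kappa) by lra.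
  apply Rmult_le_compat_l; [lra|]. eapply Rle_trans; [apply sumR_abs|].
  replace s with (sumR N (fun j => s * mt_weight N d a x i j))
    by (rewrite sumR_scal, sumR_mt_weight; ring).
  apply sumR_le. intros j Hj. rewrite Rabs_mult, Rabs_right by apply Rle_ge, mt_weight_nonneg.
  rewrite Rmult_comm. apply Rmult_le_compat_r; auto using mt_weight_nonneg.
Qed.

Lemma phi_lip_nonneg : 0 <= phi_lip N La c1 c2.
Proof.
  unfold phi_lip. apply Rmult_le_pos; [apply Rlt_le, Rdiv_lt_0_compat; nra|].
  assert (0 <= c2 / c1) by (apply Rlt_le, Rdiv_lt_0_compat; lra). lra.
Qed.

Lemma mt_weight_lip x x' del i j : (j < N)%nat ->
  (forall l, (l < N)%nat -> Rabs (dist_ij d x i l - dist_ij d x' i l) <= del) ->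
  Rabs (mt_weight N d a x i j - mt_weight N d a x' i j) <= phi_lip N La c1 c2 * del.
Proof.
  intros Hj Hdel.
  assert (Ha_lip : forall l, (l < N)%nat ->
    Rabs (a (dist_ij d x i l) - a (dist_ij d x' i l)) <= La * del).
  { intros l Hl. eapply Rle_trans; [apply HaL; apply dist_ij_nonneg|].
    apply Rmult_le_compat_l; [lra|auto]. }
  unfold mt_weight, phi_lip.
  replace (La / (INR N * c1) * (1 + c2 / c1) * del)
    with (La * del / (INR N * c1) + c2 * (INR N * (La * del)) / ((INR N * c1) * (INR N * c1)))
    by (field; lra).
  apply Rabs_div_sub_le; try apply mt_denom_bounds; [nra| |auto|].
  - rewrite Rabs_right by (pose proof (Ha _ (dist_ij_nonneg x' i j)); lra).
    apply Ha, dist_ij_nonneg.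
  - rewrite <- sumR_minus, <- sumR_const. eapply Rle_trans; [apply sumR_abs|].
    apply sumR_le. auto.
Qed.

Lemma dist_ij_lip x x' e i j : (i < N)%nat -> (j < N)%nat ->
  (forall l k, (l < N)%nat -> (k < d)%nat -> Rabs (x l k - x' l k) <= e) ->
  Rabs (dist_ij d x i j - dist_ij d x' i j) <= 2 * INR d * e.
Proof.
  intros Hi Hj He. replace (2 * INR d * e) with (INR d * (2 * e)) by ring.
  apply enorm_lip. intros k Hk'.
  replace (x i k - x j k - (x' i k - x' j k)) with ((x i k - x' i k) - (x j k - x' j k)) by ring.
  eapply Rle_trans; [apply Rabs_sub_le|].
  pose proof (He i k Hi Hk'). pose proof (He j k Hj Hk'). lra.
Qed.

Definition force_lip_const B := kappa * (2 + 4 * INR N * INR d * phi_lip N La c1 c2 * B).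

Lemma force_lip_const_nonneg B : 0 <= B -> 0 <= force_lip_const B.
Proof.
  intros HB. pose proof phi_lip_nonneg. pose proof (pos_INR d). unfold force_lip_const.
  set (p := phi_lip N La c1 c2) in *. apply Rmult_le_pos; [lra|].
  assert (0 <= (INR N * INR d) * (p * B)) by (apply Rmult_le_pos; apply Rmult_le_pos; lra).
  lra.
Qed.

Lemma mt_force_lip x v x' v' e B i k : (i < N)%nat -> (k < d)%nat ->
  (forall l m, (l < N)%nat -> (m < d)%nat -> Rabs (x l m - x' l m) <= e) ->
  (forall l m, (l < N)%nat -> (m < d)%nat -> Rabs (v l m - v' l m) <= e) ->
  (forall l m, (l < N)%nat -> (m < d)%nat -> Rabs (v' l m) <= B) ->
  Rabs (mt_force N d kappa a x v i k - mt_force N d kappa a x' v' i k) <= force_lip_const B * e.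
Proof.
  intros Hi Hkd Hx Hv HB. set (Lw := phi_lip N La c1 c2 * (2 * INR d * e)).
  assert (Hw : forall j, (j < N)%nat ->
    Rabs (mt_weight N d a x i j - mt_weight N d a x' i j) <= Lw).
  { intros j Hj. apply mt_weight_lip; auto. intros l Hl. apply dist_ij_lip; auto. }
  unfold mt_force, force_lip_const.
  rewrite <- Rmult_minus_distr_l, Rabs_mult, Rabs_right, Rmult_assoc by lra.
  apply Rmult_le_compat_l; [lra|]. rewrite <- sumR_minus.
  eapply Rle_trans; [apply sumR_abs|].
  replace ((2 + 4 * INR N * INR d * phi_lip N La c1 c2 * B) * e)
    with (sumR N (fun j => 2 * e * mt_weight N d a x i j + Lw * (2 * B)))
    by (rewrite sumR_plus, sumR_scal, sumR_mt_weight, sumR_const; unfold Lw; ring).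
  apply sumR_le. intros j Hj.
  replace (mt_weight N d a x i j * (v j k - v i k) - mt_weight N d a x' i j * (v' j k - v' i k))
    with (mt_weight N d a x i j * ((v j k - v' j k) - (v i k - v' i k))
          + (mt_weight N d a x i j - mt_weight N d a x' i j) * (v' j k - v' i k)) by ring.
  eapply Rle_trans; [apply Rabs_triang|]. rewrite !Rabs_mult.
  rewrite (Rabs_right (mt_weight N d a x i j)) by apply Rle_ge, mt_weight_nonneg.
  pose proof (Rabs_sub_le (v j k - v' j k) (v i k - v' i k)).
  pose proof (Rabs_sub_le (v' j k) (v' i k)).
  pose proof (Hv j k Hj Hkd). pose proof (Hv i k Hi Hkd). pose proof (Hw j Hj).
  pose proof (HB j k Hj Hkd). pose proof (HB i k Hi Hkd).
  apply Rplus_le_compat.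
  - rewrite Rmult_comm. apply Rmult_le_compat_r; [apply mt_weight_nonneg|lra].
  - apply Rmult_le_compat; auto using Rabs_pos; lra.
Qed.

Definition beta := c1 / c2.

Lemma beta_bounds : 0 < beta <= 1.
Proof.
  unfold beta. split; [apply Rdiv_lt_0_compat; lra|].
  apply Rmult_le_reg_r with c2; [lra|]. field_simplify; lra.
Qed.

Section Discrete.

Variables (h : R) (x0 v0 : config).
Hypothesis Hh : 0 < h.
Hypothesis Hhk : h * kappa < 1.

Definition xh n := fst (mt_discrete N d kappa a h x0 v0 n).
Definition vh n := snd (mt_discrete N d kappa a h x0 v0 n).

Lemma xh_S n : xh (S n) = fun i k => xh n i k + h * vh n i k.
Proof. unfold xh, vh; simpl. now destruct (mt_discrete N d kappa a h x0 v0 n). Qed.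

Lemma vh_S n : vh (S n) = fun i k => vh n i k + h * mt_force N d kappa a (xh n) (vh n) i k.
Proof. unfold xh, vh; simpl. now destruct (mt_discrete N d kappa a h x0 v0 n). Qed.

Definition rho := 1 - h * kappa * beta.

Let D := diam N d v0.

Lemma rho_bounds : 0 <= rho < 1.
Proof. unfold rho. pose proof beta_bounds. assert (0 < h * kappa) by nra. split; nra. Qed.

Lemma rho_pow_le_exp n : rho ^ n <= exp (- (kappa * beta) * (INR n * h)).
Proof.
  pose proof rho_bounds.
  replace (- (kappa * beta) * (INR n * h)) with (INR n * (- (h * kappa * beta))) by ring.
  rewrite exp_INR_mul. apply pow_incr. split; [lra|].
  unfold rho. replace (1 - h * kappa * beta) with (1 + - (h * kappa * beta)) by ring.
  apply exp_ineq1_le.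
Qed.

Lemma vh_step_range n k m M :
  (forall j, (j < N)%nat -> m <= vh n j k <= M) ->
  let c := h * kappa * weight_lb * sumR N (fun j => vh n j k) in
  forall i, (i < N)%nat -> rho * m + c <= vh (S n) i k <= rho * M + c.
Proof.
  intros Hv c i Hi.
  (* Up to the common term [c], the update is a nonnegative combination of the [v_j] of total
     weight [rho], because [phi_ij >= weight_lb]. *)
  set (w j := mt_weight N d a (xh n) i j - weight_lb).
  assert (Hw : forall j, (j < N)%nat -> 0 <= w j)
    by (intros j _; unfold w; pose proof (mt_weight_ge (xh n) i j); lra).
  assert (Hsw : sumR N w = 1 - beta)
    by (unfold w, beta; rewrite sumR_minus, sumR_mt_weight, sumR_const, N_weight_lb; ring).
  assert (Hstep : vh (S n) i k
    = (1 - h * kappa) * vh n i k + h * kappa * sumR N (fun j => w j * vh n j k) + c).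
  { rewrite vh_S, mt_force_alt. unfold c, w.
    rewrite (sumR_ext _ (fun j => (mt_weight N d a (xh n) i j - weight_lb) * vh n j k)
               (fun j => mt_weight N d a (xh n) i j * vh n j k - weight_lb * vh n j k))
      by (intros; ring).
    rewrite sumR_minus, sumR_scal. ring. }
  pose proof (sumR_weighted_bounds N w (fun j => vh n j k) m M Hw Hv) as Hsum.
  rewrite Hsw in Hsum. destruct (Hv i Hi). destruct Hsum.
  assert (Hhk0 : 0 <= h * kappa) by nra.
  rewrite Hstep. unfold rho. split.
  - assert ((1 - h * kappa) * m <= (1 - h * kappa) * vh n i k) by (apply Rmult_le_compat_l; lra).
    assert (h * kappa * ((1 - beta) * m) <= h * kappa * sumR N (fun j => w j * vh n j k))
      by (apply Rmult_le_compat_l; lra).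
    lra.
  - assert ((1 - h * kappa) * vh n i k <= (1 - h * kappa) * M) by (apply Rmult_le_compat_l; lra).
    assert (h * kappa * sumR N (fun j => w j * vh n j k) <= h * kappa * ((1 - beta) * M))
      by (apply Rmult_le_compat_l; lra).
    lra.
Qed.

Lemma vh_coord_range n k : (k < d)%nat ->
  exists m M, M - m <= rho ^ n * (2 * D) /\ forall j, (j < N)%nat -> m <= vh n j k <= M.
Proof.
  intros Hk'. induction n as [|n (m & M & HmM & Hv)].
  - exists (v0 0%nat k - D), (v0 0%nat k + D). split; [simpl; lra|].
    intros j Hj. pose proof (coord_le_diam N d v0 j 0 k Hj ltac:(lia) Hk') as Hc.
    apply Rabs_le_between in Hc. change (vh 0 j k) with (v0 j k). unfold D. lra.
  - set (c := h * kappa * weight_lb * sumR N (fun j => vh n j k)).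
    exists (rho * m + c), (rho * M + c). split.
    + simpl. pose proof rho_bounds.
      replace (rho * M + c - (rho * m + c)) with (rho * (M - m)) by ring.
      rewrite Rmult_assoc. apply Rmult_le_compat_l; lra.
    + exact (vh_step_range n k m M Hv).
Qed.

Lemma vh_spread n i j k : (i < N)%nat -> (j < N)%nat -> (k < d)%nat ->
  Rabs (vh n i k - vh n j k) <= rho ^ n * (2 * D).
Proof.
  intros Hi Hj Hk'. destruct (vh_coord_range n k Hk') as (m & M & HmM & Hv).
  pose proof (Hv i Hi). pose proof (Hv j Hj). apply Rabs_le. lra.
Qed.

Lemma vh_increment_le n i k : (i < N)%nat -> (k < d)%nat ->
  Rabs (vh (S n) i k - vh n i k) <= h * kappa * (rho ^ n * (2 * D)).
Proof.
  intros Hi Hk'. rewrite vh_S.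
  replace (vh n i k + h * _ - vh n i k) with (h * mt_force N d kappa a (xh n) (vh n) i k) by ring.
  rewrite Rabs_mult, Rabs_right, Rmult_assoc by lra. apply Rmult_le_compat_l; [lra|].
  apply mt_force_abs_le. intros j Hj. now apply vh_spread.
Qed.

Lemma vh_tail_le m p i k : (i < N)%nat -> (k < d)%nat ->
  Rabs (vh (m + p) i k - vh m i k) <= 2 * D / beta * (rho ^ m - rho ^ (m + p)).
Proof.
  intros Hi Hk'. pose proof beta_bounds. induction p as [|p IH].
  - rewrite Nat.add_0_r, !Rminus_diag, Rabs_R0, Rmult_0_r. lra.
  - replace (vh (m + S p) i k - vh m i k)
      with ((vh (S (m + p)) i k - vh (m + p) i k) + (vh (m + p) i k - vh m i k))
      by (rewrite Nat.add_succ_r; ring).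
    eapply Rle_trans; [apply Rabs_triang|].
    pose proof (vh_increment_le (m + p) i k Hi Hk').
    replace (2 * D / beta * (rho ^ m - rho ^ (m + S p)))
      with (h * kappa * (rho ^ (m + p) * (2 * D)) + 2 * D / beta * (rho ^ m - rho ^ (m + p)))
      by (rewrite Nat.add_succ_r; simpl; unfold rho; field; lra).
    lra.
Qed.

Lemma xh_rel_drift_le n i j k : (i < N)%nat -> (j < N)%nat -> (k < d)%nat ->
  Rabs ((xh n i k - xh n j k) - (x0 i k - x0 j k)) <= 2 * D / (kappa * beta) * (1 - rho ^ n).
Proof.
  intros Hi Hj Hk'. pose proof beta_bounds. induction n as [|n IH].
  - change (xh 0) with x0. rewrite Rminus_diag, Rabs_R0. simpl. lra.
  - rewrite xh_S.
    replace (xh n i k + h * vh n i k - (xh n j k + h * vh n j k) - (x0 i k - x0 j k))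
      with ((xh n i k - xh n j k - (x0 i k - x0 j k)) + h * (vh n i k - vh n j k)) by ring.
    eapply Rle_trans; [apply Rabs_triang|]. rewrite Rabs_mult, (Rabs_right h) by lra.
    pose proof (vh_spread n i j k Hi Hj Hk').
    assert (h * Rabs (vh n i k - vh n j k) <= h * (rho ^ n * (2 * D)))
      by (apply Rmult_le_compat_l; lra).
    replace (2 * D / (kappa * beta) * (1 - rho ^ S n))
      with (2 * D / (kappa * beta) * (1 - rho ^ n) + h * (rho ^ n * (2 * D)))
      by (simpl; unfold rho; field; lra).
    lra.
Qed.

Lemma vh_tail_le_exp m p i k : (i < N)%nat -> (k < d)%nat ->
  Rabs (vh (m + p) i k - vh m i k) <= 2 * D / beta * exp (- (kappa * beta) * (INR m * h)).
Proof.
  intros Hi Hk'. eapply Rle_trans; [apply vh_tail_le; auto|].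
  pose proof beta_bounds. pose proof rho_bounds. pose proof (pow_le rho (m + p) (proj1 rho_bounds)).
  apply Rmult_le_compat_l.
  - apply Rmult_le_pos; [pose proof (diam_nonneg N d v0); unfold D; lra|].
    apply Rlt_le, Rinv_0_lt_compat; lra.
  - pose proof (rho_pow_le_exp m). lra.
Qed.

Lemma xh_rel_drift_le_uniform n i j k : (i < N)%nat -> (j < N)%nat -> (k < d)%nat ->
  Rabs ((xh n i k - xh n j k) - (x0 i k - x0 j k)) <= 2 * D / (kappa * beta).
Proof.
  intros Hi Hj Hk'. eapply Rle_trans; [apply xh_rel_drift_le; auto|].
  pose proof beta_bounds. pose proof rho_bounds.
  pose proof (pow_le rho n (proj1 rho_bounds)). pose proof (diam_nonneg N d v0).
  assert (0 <= 2 * D / (kappa * beta)).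
  { apply Rmult_le_pos; [unfold D; lra|].
    apply Rlt_le, Rinv_0_lt_compat; nra. }
  nra.
Qed.

End Discrete.

Section Continuous.

Variables X V : R -> config.
Hypothesis Hsol : mt_solution N d kappa a X V.

Lemma X_mvt i k s t : (i < N)%nat -> (k < d)%nat -> 0 <= s <= t ->
  exists c, s <= c <= t /\ X t i k - X s i k = V c i k * (t - s).
Proof.
  intros Hi Hk'. destruct Hsol as [Hd Hc].
  apply (mvt_right_cont (fun s => X s i k) (fun c => V c i k)).
  - intros; now apply Hd.
  - now apply Hc.
Qed.

Lemma V_mvt i k s t : (i < N)%nat -> (k < d)%nat -> 0 <= s <= t ->
  exists c, s <= c <= t /\ V t i k - V s i k = mt_force N d kappa a (X c) (V c) i k * (t - s).
Proof.
  intros Hi Hk'. destruct Hsol as [Hd Hc].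
  apply (mvt_right_cont (fun s => V s i k) (fun c => mt_force N d kappa a (X c) (V c) i k)).
  - intros; now apply Hd.
  - now apply Hc.
Qed.

Lemma V_bounded T : 0 <= T -> exists B, 0 <= B /\
  forall t i k, 0 <= t <= T -> (i < N)%nat -> (k < d)%nat -> Rabs (V t i k) <= B.
Proof.
  intros HT. destruct Hsol as [Hd Hc].
  destruct (bound_finite_family N
    (fun i b => forall t k, 0 <= t <= T -> (k < d)%nat -> Rabs (V t i k) <= b)) as (B & HB & HBi).
  - intros i b b' Hb Hp t k Ht Hk'. eapply Rle_trans; [apply Hp|]; auto.
  - intros i Hi.
    destruct (bound_finite_family d
      (fun k b => forall t, 0 <= t <= T -> Rabs (V t i k) <= b)) as (B & _ & HBk).
    + intros k b b' Hb Hp t Ht. eapply Rle_trans; [apply Hp|]; auto.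
    + intros k Hk'.
      apply (bounded_on_compact (fun s => V s i k) (fun c => mt_force N d kappa a (X c) (V c) i k));
        auto; [intros; now apply Hd|now apply Hc].
    + exists B. intros t k Ht Hk'. now apply HBk.
  - exists B. split; auto.
Qed.

Definition euler_err h n := maxR N (fun i => maxR d (fun k =>
  Rmax (Rabs (xh h (X 0) (V 0) n i k - X (INR n * h) i k))
       (Rabs (vh h (X 0) (V 0) n i k - V (INR n * h) i k)))).

Lemma euler_err_ge h n i k : (i < N)%nat -> (k < d)%nat ->
  Rabs (xh h (X 0) (V 0) n i k - X (INR n * h) i k) <= euler_err h n /\
  Rabs (vh h (X 0) (V 0) n i k - V (INR n * h) i k) <= euler_err h n.
Proof.
  intros Hi Hk'.
  assert (Hik : Rmax (Rabs (xh h (X 0) (V 0) n i k - X (INR n * h) i k))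
                     (Rabs (vh h (X 0) (V 0) n i k - V (INR n * h) i k)) <= euler_err h n).
  { eapply Rle_trans; [|apply (maxR_ge _ _ i Hi)].
    apply (maxR_ge _ (fun k => Rmax _ _) k Hk'). }
  split; [apply (Rle_trans _ _ _ (Rmax_l _ _) Hik)|apply (Rle_trans _ _ _ (Rmax_r _ _) Hik)].
Qed.

Section Horizon.

Variables T B : R.
Hypothesis HB0 : 0 <= B.
Hypothesis HB : forall t i k, 0 <= t <= T -> (i < N)%nat -> (k < d)%nat -> Rabs (V t i k) <= B.

Let Bf := kappa * (2 * B).
Let LF := force_lip_const B.

Lemma force_bound_on_horizon t i k : 0 <= t <= T -> (i < N)%nat -> (k < d)%nat ->
  Rabs (mt_force N d kappa a (X t) (V t) i k) <= Bf.
Proof.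
  intros Ht Hi Hk'. apply mt_force_abs_le. intros j Hj.
  eapply Rle_trans; [apply Rabs_sub_le|].
  pose proof (HB t j k Ht Hj Hk'). pose proof (HB t i k Ht Hi Hk').
  lra.
Qed.

Lemma X_increment_on_horizon s t i k : 0 <= s <= t -> t <= T -> (i < N)%nat -> (k < d)%nat ->
  Rabs (X t i k - X s i k) <= B * (t - s).
Proof.
  intros Hst HT Hi Hk'. destruct Hsol as [Hd Hc].
  apply (increment_le (fun s => X s i k) (fun c => V c i k)); auto.
  - intros; now apply Hd.
  - now apply Hc.
  - intros c Hc'. apply HB; auto; lra.
Qed.

Lemma V_increment_on_horizon s t i k : 0 <= s <= t -> t <= T -> (i < N)%nat -> (k < d)%nat ->
  Rabs (V t i k - V s i k) <= Bf * (t - s).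
Proof.
  intros Hst HT Hi Hk'. destruct Hsol as [Hd Hc].
  apply (increment_le (fun s => V s i k) (fun c => mt_force N d kappa a (X c) (V c) i k)); auto.
  - intros; now apply Hd.
  - now apply Hc.
  - intros c Hc'. apply force_bound_on_horizon; auto; lra.
Qed.

Lemma X_local_error t h i k : 0 <= t -> 0 <= h -> t + h <= T -> (i < N)%nat -> (k < d)%nat ->
  Rabs (X (t + h) i k - X t i k - h * V t i k) <= h ^ 2 * Bf.
Proof.
  intros Ht Hh HT Hi Hk'. destruct (X_mvt i k t (t + h) Hi Hk' ltac:(lra)) as (c & Hc & ->).
  replace (V c i k * (t + h - t) - h * V t i k) with (h * (V c i k - V t i k)) by ring.
  rewrite Rabs_mult, Rabs_right by lra.
  pose proof (V_increment_on_horizon t c i k ltac:(lra) ltac:(lra) Hi Hk').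
  assert (0 <= Bf) by (unfold Bf; nra).
  assert (Bf * (c - t) <= Bf * h) by (apply Rmult_le_compat_l; lra).
  simpl. replace (h * (h * 1) * Bf) with (h * (Bf * h)) by ring.
  apply Rmult_le_compat_l; lra.
Qed.

Lemma V_local_error t h i k : 0 <= t -> 0 <= h -> t + h <= T -> (i < N)%nat -> (k < d)%nat ->
  Rabs (V (t + h) i k - V t i k - h * mt_force N d kappa a (X t) (V t) i k)
    <= h ^ 2 * (LF * (B + Bf)).
Proof.
  intros Ht Hh HT Hi Hk'. destruct (V_mvt i k t (t + h) Hi Hk' ltac:(lra)) as (c & Hc & ->).
  replace (_ * (t + h - t) - h * _) with
    (h * (mt_force N d kappa a (X c) (V c) i k - mt_force N d kappa a (X t) (V t) i k)) by ring.
  rewrite Rabs_mult, Rabs_right by lra.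
  assert (0 <= Bf) by (unfold Bf; nra).
  assert (Bh : B * (c - t) <= B * h) by (apply Rmult_le_compat_l; lra).
  assert (Bfh : Bf * (c - t) <= Bf * h) by (apply Rmult_le_compat_l; lra).
  assert (Rabs (mt_force N d kappa a (X c) (V c) i k - mt_force N d kappa a (X t) (V t) i k)
            <= LF * (h * (B + Bf))).
  { apply mt_force_lip; auto; intros j l Hj Hl.
    - pose proof (X_increment_on_horizon t c j l ltac:(lra) ltac:(lra) Hj Hl). nra.
    - pose proof (V_increment_on_horizon t c j l ltac:(lra) ltac:(lra) Hj Hl). nra.
    - apply HB; auto; lra. }
  simpl. replace (h * (h * 1) * (LF * (B + Bf))) with (h * (LF * (h * (B + Bf)))) by ring.
  apply Rmult_le_compat_l; lra.
Qed.

Lemma xh_err_step h n i k : 0 < h -> INR n * h + h <= T -> (i < N)%nat -> (k < d)%nat ->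
  Rabs (xh h (X 0) (V 0) (S n) i k - X (INR n * h + h) i k)
    <= (1 + h) * euler_err h n + h ^ 2 * Bf.
Proof.
  intros Hh HT Hi Hk'. set (t := INR n * h) in *.
  assert (Ht : 0 <= t) by (pose proof (pos_INR n); unfold t; nra).
  destruct (euler_err_ge h n i k Hi Hk') as [Ex Ev]. fold t in Ex, Ev.
  rewrite xh_S.
  replace (xh h (X 0) (V 0) n i k + h * vh h (X 0) (V 0) n i k - X (t + h) i k)
    with ((xh h (X 0) (V 0) n i k - X t i k) + h * (vh h (X 0) (V 0) n i k - V t i k)
          - (X (t + h) i k - X t i k - h * V t i k)) by ring.
  eapply Rle_trans; [apply Rabs_sub_le|].
  eapply Rle_trans; [apply Rplus_le_compat_r, Rabs_triang|].
  rewrite Rabs_mult, (Rabs_right h) by lra.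
  pose proof (X_local_error t h i k Ht (Rlt_le _ _ Hh) HT Hi Hk').
  assert (h * Rabs (vh h (X 0) (V 0) n i k - V t i k) <= h * euler_err h n)
    by (apply Rmult_le_compat_l; lra).
  lra.
Qed.

Lemma vh_err_step h n i k : 0 < h -> INR n * h + h <= T -> (i < N)%nat -> (k < d)%nat ->
  Rabs (vh h (X 0) (V 0) (S n) i k - V (INR n * h + h) i k)
    <= (1 + h * LF) * euler_err h n + h ^ 2 * (LF * (B + Bf)).
Proof.
  intros Hh HT Hi Hk'. set (t := INR n * h) in *.
  assert (Ht : 0 <= t) by (pose proof (pos_INR n); unfold t; nra).
  destruct (euler_err_ge h n i k Hi Hk') as [Ex Ev]. fold t in Ex, Ev.
  rewrite vh_S.
  set (Fh := mt_force N d kappa a (xh h (X 0) (V 0) n) (vh h (X 0) (V 0) n) i k).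
  set (Ft := mt_force N d kappa a (X t) (V t) i k).
  replace (vh h (X 0) (V 0) n i k + h * Fh - V (t + h) i k)
    with ((vh h (X 0) (V 0) n i k - V t i k) + h * (Fh - Ft)
          - (V (t + h) i k - V t i k - h * Ft)) by ring.
  eapply Rle_trans; [apply Rabs_sub_le|].
  eapply Rle_trans; [apply Rplus_le_compat_r, Rabs_triang|].
  rewrite Rabs_mult, (Rabs_right h) by lra.
  pose proof (V_local_error t h i k Ht (Rlt_le _ _ Hh) HT Hi Hk') as Hloc. fold Ft in Hloc.
  assert (Rabs (Fh - Ft) <= LF * euler_err h n).
  { apply mt_force_lip; auto.
    - intros l m Hl Hm. apply (euler_err_ge h n l m Hl Hm).
    - intros l m Hl Hm. apply (euler_err_ge h n l m Hl Hm).
    - intros l m Hl Hm. apply HB; auto; lra. }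
  assert (h * Rabs (Fh - Ft) <= h * (LF * euler_err h n)) by (apply Rmult_le_compat_l; lra).
  lra.
Qed.

Lemma euler_err_step h n : 0 < h -> INR (S n) * h <= T ->
  euler_err h (S n) <= (1 + h * (1 + LF)) * euler_err h n + h ^ 2 * (Bf + LF * (B + Bf)).
Proof.
  intros Hh HT. rewrite S_INR, Rmult_plus_distr_r, Rmult_1_l in HT.
  assert (He : 0 <= euler_err h n) by apply maxR_nonneg.
  assert (0 <= Bf) by (unfold Bf; nra).
  assert (0 <= LF) by now apply force_lip_const_nonneg.
  assert (0 <= h * LF * euler_err h n) by (apply Rmult_le_pos; nra).
  assert (0 <= h ^ 2 * (LF * (B + Bf))) by (apply Rmult_le_pos; [apply pow2_ge_0|nra]).
  assert (0 <= h ^ 2 * Bf) by (apply Rmult_le_pos; [apply pow2_ge_0|nra]).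
  assert (0 <= h * euler_err h n) by nra.
  apply maxR_le; [nra|]. intros i Hi. apply maxR_le; [nra|]. intros k Hk'.
  rewrite S_INR, Rmult_plus_distr_r, Rmult_1_l.
  pose proof (xh_err_step h n i k Hh HT Hi Hk'). pose proof (vh_err_step h n i k Hh HT Hi Hk').
  apply Rmax_lub; lra.
Qed.

End Horizon.

Lemma euler_err_0 h : euler_err h 0 <= 0.
Proof.
  apply maxR_le; [lra|]. intros i Hi. apply maxR_le; [lra|]. intros k Hk'.
  change (xh h (X 0) (V 0) 0) with (X 0). change (vh h (X 0) (V 0) 0) with (V 0).
  rewrite Rmult_0_l, !Rminus_diag, Rabs_R0, Rmax_left; lra.
Qed.

Lemma euler_err_le T : 0 <= T -> exists C, 0 <= C /\
  forall h n, 0 < h -> INR n * h <= T -> euler_err h n <= C * h.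
Proof.
  intros HT. destruct (V_bounded T HT) as (B & HB0 & HB).
  set (LF := force_lip_const B).
  set (C := kappa * (2 * B) + LF * (B + kappa * (2 * B))).
  assert (HLF : 0 <= LF) by now apply force_lip_const_nonneg.
  assert (HC : 0 <= C).
  { assert (0 <= kappa * (2 * B)) by nra. unfold C.
    apply Rplus_le_le_0_compat; [lra|apply Rmult_le_pos; lra]. }
  exists (T * C * exp ((1 + LF) * T)). split; [apply Rmult_le_pos; [nra|apply Rlt_le, exp_pos]|].
  intros h n Hh Hn.
  eapply Rle_trans; [apply (discrete_gronwall (euler_err h) h (1 + LF) C n); try lra|].
  - apply euler_err_0.
  - intros m Hm. apply (euler_err_step T B HB0 HB h m Hh).
    eapply Rle_trans; [|exact Hn]. apply Rmult_le_compat_r; [lra|apply le_INR; lia].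
  - pose proof (pos_INR n).
    replace (T * C * exp ((1 + LF) * T) * h) with (T * (h * C) * exp ((1 + LF) * T)) by ring.
    assert (0 <= h * C) by nra.
    apply Rmult_le_compat; [apply Rmult_le_pos; nra|apply Rlt_le, exp_pos|
                            apply Rmult_le_compat_r; lra|].
    destruct (Rle_lt_or_eq_dec _ _ Hn) as [Hlt| Heq]; [|rewrite Heq; lra].
    apply Rlt_le, exp_increasing. apply Rmult_lt_compat_l; lra.
Qed.

Lemma euler_refinement h T eps : 0 < h -> 0 <= T -> 0 < eps ->
  exists K, (0 < K)%nat /\ 0 < h / INR K /\ h / INR K * kappa < 1 /\
  forall n i k, INR n * h <= T -> (i < N)%nat -> (k < d)%nat ->
    Rabs (xh (h / INR K) (X 0) (V 0) (n * K) i k - X (INR n * h) i k) <= eps /\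
    Rabs (vh (h / INR K) (X 0) (V 0) (n * K) i k - V (INR n * h) i k) <= eps.
Proof.
  intros Hh HT He. destruct (euler_err_le T HT) as (C & HC & Herr).
  assert (Hbound : 0 < Rmin (eps / (C + 1)) (/ kappa))
    by (apply Rmin_pos; [apply Rdiv_lt_0_compat|apply Rinv_0_lt_compat]; lra).
  destruct (exists_fine_subdivision h _ Hh Hbound) as (K & HK & HhK).
  pose proof (Rmin_l (eps / (C + 1)) (/ kappa)). pose proof (Rmin_r (eps / (C + 1)) (/ kappa)).
  assert (HKpos : 0 < INR K) by (apply lt_0_INR; lia).
  exists K. set (h' := h / INR K) in *.
  assert (Hh' : 0 < h') by (apply Rdiv_lt_0_compat; lra).
  split; [exact HK|]. split; [exact Hh'|]. split.
  { apply Rlt_le_trans with (/ kappa * kappa); [apply Rmult_lt_compat_r; lra|].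
    rewrite Rinv_l; lra. }
  intros n i k Hn Hi Hk'.
  assert (Hgrid : INR (n * K) * h' = INR n * h) by (unfold h'; rewrite mult_INR; field; lra).
  assert (HCh : C * h' <= eps).
  { apply Rle_trans with ((C + 1) * (eps / (C + 1))); [|right; field; lra].
    apply Rmult_le_compat; lra. }
  rewrite <- Hgrid. rewrite <- Hgrid in Hn.
  destruct (euler_err_ge h' (n * K) i k Hi Hk') as [Ex Ev].
  pose proof (Herr h' (n * K)%nat Hh' Hn). split; lra.
Qed.

Lemma X_rel_drift_le h n i j k : 0 < h -> (i < N)%nat -> (j < N)%nat -> (k < d)%nat ->
  Rabs ((X (INR n * h) i k - X (INR n * h) j k) - (X 0 i k - X 0 j k))
    <= 2 * diam N d (V 0) / (kappa * beta).
Proof.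
  intros Hh Hi Hj Hk'. apply le_epsilon. intros eps He.
  assert (HT : 0 <= INR n * h) by (pose proof (pos_INR n); nra).
  destruct (euler_refinement h (INR n * h) (eps / 2) Hh HT ltac:(lra))
    as (K & _ & Hh' & Hhk' & Href).
  destruct (Href n i k (Rle_refl _) Hi Hk') as [Ei _].
  destruct (Href n j k (Rle_refl _) Hj Hk') as [Ej _].
  pose proof (xh_rel_drift_le_uniform _ (X 0) (V 0) Hh' Hhk' (n * K) i j k Hi Hj Hk').
  set (x := xh (h / INR K) (X 0) (V 0) (n * K)) in *.
  replace (X (INR n * h) i k - X (INR n * h) j k - (X 0 i k - X 0 j k))
    with ((x i k - x j k - (X 0 i k - X 0 j k)) - (x i k - X (INR n * h) i k)
          + (x j k - X (INR n * h) j k)) by ring.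
  eapply Rle_trans; [apply Rabs_triang|].
  eapply Rle_trans; [apply Rplus_le_compat_r, Rabs_sub_le|]. lra.
Qed.

Lemma V_tail_le h m p i k : 0 < h -> (i < N)%nat -> (k < d)%nat ->
  Rabs (V (INR (m + p) * h) i k - V (INR m * h) i k)
    <= 2 * diam N d (V 0) / beta * exp (- (kappa * beta) * (INR m * h)).
Proof.
  intros Hh Hi Hk'. apply le_epsilon. intros eps He.
  assert (HT : 0 <= INR (m + p) * h) by (pose proof (pos_INR (m + p)); nra).
  destruct (euler_refinement h (INR (m + p) * h) (eps / 2) Hh HT ltac:(lra))
    as (K & HK & Hh' & Hhk' & Href).
  destruct (Href (m + p)%nat i k (Rle_refl _) Hi Hk') as [_ E1].
  destruct (Href m i k ltac:(apply Rmult_le_compat_r; [lra|apply le_INR; lia]) Hi Hk') as [_ E2].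
  pose proof (vh_tail_le_exp _ (X 0) (V 0) Hh' Hhk' (m * K) (p * K) i k Hi Hk') as Ht.
  replace (m * K + p * K)%nat with ((m + p) * K)%nat in Ht by lia.
  replace (INR (m * K) * (h / INR K)) with (INR m * h) in Ht
    by (rewrite mult_INR; field; apply not_0_INR; lia).
  set (v := vh (h / INR K) (X 0) (V 0)) in *.
  replace (V (INR (m + p) * h) i k - V (INR m * h) i k)
    with ((v ((m + p) * K)%nat i k - v (m * K)%nat i k)
          - (v ((m + p) * K)%nat i k - V (INR (m + p) * h) i k)
          + (v (m * K)%nat i k - V (INR m * h) i k)) by ring.
  eapply Rle_trans; [apply Rabs_triang|].
  eapply Rle_trans; [apply Rplus_le_compat_r, Rabs_sub_le|]. lra.
Qed.

Lemma xh_X_rel_gap_le h n i j k : 0 < h -> h * kappa < 1 ->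
  (i < N)%nat -> (j < N)%nat -> (k < d)%nat ->
  Rabs ((xh h (X 0) (V 0) n i k - xh h (X 0) (V 0) n j k)
        - (X (INR n * h) i k - X (INR n * h) j k))
    <= 4 * diam N d (V 0) / (kappa * beta).
Proof.
  intros Hh Hhk Hi Hj Hk'.
  pose proof (xh_rel_drift_le_uniform h (X 0) (V 0) Hh Hhk n i j k Hi Hj Hk').
  pose proof (X_rel_drift_le h n i j k Hh Hi Hj Hk').
  set (x := xh h (X 0) (V 0) n) in *. set (t := INR n * h) in *.
  replace (x i k - x j k - (X t i k - X t j k))
    with ((x i k - x j k - (X 0 i k - X 0 j k)) - (X t i k - X t j k - (X 0 i k - X 0 j k)))
    by ring.
  eapply Rle_trans; [apply Rabs_sub_le|]. unfold Rdiv in *. lra.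
Qed.

Lemma vh_V_close eps : 0 < eps -> exists delta, 0 < delta /\
  forall h n i k, 0 < h -> h * kappa < 1 -> h < 1 -> h < delta -> (i < N)%nat -> (k < d)%nat ->
    Rabs (vh h (X 0) (V 0) n i k - V (INR n * h) i k) <= eps.
Proof.
  intros He. pose proof beta_bounds.
  (* Up to time [T + 1] the Euler error is [O(h)]; afterwards both the scheme and the solution
     stay within [eps / 3] of their values at the last grid time before [T + 1]. *)
  set (Q := 2 * diam N d (V 0) / beta).
  assert (HQ : 0 <= Q)
    by (apply Rmult_le_pos; [pose proof (diam_nonneg N d (V 0)); lra|
                             apply Rlt_le, Rinv_0_lt_compat; lra]).
  destruct (exp_decay_eventually_le Q (kappa * beta) (eps / 3) HQ ltac:(nra) ltac:(lra))
    as (T & HT & Hdecay).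
  destruct (euler_err_le (T + 1) ltac:(lra)) as (C & HC & Herr).
  exists (eps / 3 / (C + 1)). split; [apply Rdiv_lt_0_compat; lra|].
  intros h n i k Hh Hhk Hh1 Hhd Hi Hk'.
  assert (HCh : C * h <= eps / 3).
  { apply Rle_trans with ((C + 1) * (eps / 3 / (C + 1))); [|right; field; lra].
    apply Rmult_le_compat; lra. }
  assert (Hgrid : forall m, INR m * h <= T + 1 ->
    Rabs (vh h (X 0) (V 0) m i k - V (INR m * h) i k) <= eps / 3).
  { intros m Hm. pose proof (Herr h m Hh Hm). pose proof (euler_err_ge h m i k Hi Hk'). lra. }
  destruct (Rle_lt_dec (INR n * h) (T + 1)) as [Hn|Hn]; [pose proof (Hgrid n Hn); lra|].
  destruct (exists_grid_index (T + 1) h ltac:(lra) Hh) as (m & Hm1 & Hm2).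
  assert (Hmn : (m <= n)%nat).
  { apply INR_le. apply Rmult_le_reg_r with h; lra. }
  replace n with (m + (n - m))%nat by lia. set (p := (n - m)%nat).
  pose proof (Hdecay (INR m * h) ltac:(lra)).
  pose proof (vh_tail_le_exp h (X 0) (V 0) Hh Hhk m p i k Hi Hk') as Hvh.
  pose proof (V_tail_le h m p i k Hh Hi Hk') as HV.
  pose proof (Hgrid m Hm1). fold Q in Hvh, HV.
  set (v := vh h (X 0) (V 0)).
  replace (v (m + p)%nat i k - V (INR (m + p) * h) i k)
    with ((v (m + p)%nat i k - v m i k) + (v m i k - V (INR m * h) i k)
          - (V (INR (m + p) * h) i k - V (INR m * h) i k)) by ring.
  eapply Rle_trans; [apply Rabs_sub_le|].
  eapply Rle_trans; [apply Rplus_le_compat_r, Rabs_triang|]. unfold v. lra.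
Qed.

End Continuous.

End MotschTadmor.

Lemma lt_Rmin_1_inv h kappa : 0 < kappa -> h < Rmin 1 (1 / kappa) -> h * kappa < 1 /\ h < 1.
Proof.
  intros Hk Hh. pose proof (Rmin_l 1 (1 / kappa)). pose proof (Rmin_r 1 (1 / kappa)).
  split; [|lra]. apply Rlt_le_trans with (1 / kappa * kappa).
  - apply Rmult_lt_compat_r; lra.
  - right. field. lra.
Qed.

Theorem theorem3p10 (N d : nat) (kappa : R) (a : R -> R) (c1 c2 La : R) :
  (1 <= N)%nat -> (1 <= d)%nat -> 0 < kappa ->
  0 < c1 -> c1 <= c2 -> 0 < La ->
  (forall r, 0 <= r -> c1 <= a r <= c2) ->
  (forall r s, 0 <= r -> 0 <= s -> Rabs (a r - a s) <= La * Rabs (r - s)) ->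
  exists c0 : R,
  forall X V : R -> config,
    mt_solution N d kappa a X V ->
    (* D(V(0)) <= kappa * int_{D(X(0))}^oo a(s) ds  (improper integral in Rbar) *)
    Rbar_le (Finite (diam N d (V 0)))
      (Rbar_mult (Finite kappa)
         (Lim (fun T => RInt a (diam N d (X 0)) T) p_infty)) ->
    fro N d (X 0) < M_const N La c1 c2 ->
    fro N d (V 0) < kappa * RInt (psi_fun N La c1 c2) (fro N d (X 0)) (M_const N La c1 c2) ->
    (* limsup_{h->0} sup_n ||Delta^{x,h}(n) - Delta^x(nh)||_F <= c0 D(V(0)) *)
    (forall eps, 0 < eps -> exists delta, 0 < delta /\
       forall h, 0 < h -> h < Rmin 1 (1 / kappa) -> h < delta ->
         forall n : nat,
           fro_diff N d (fst (mt_discrete N d kappa a h (X 0) (V 0) n)) (X (INR n * h))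
             <= c0 * diam N d (V 0) + eps) /\
    (* limsup_{h->0} sup_n ||V^h(n) - V(nh)|| = 0 *)
    (forall eps, 0 < eps -> exists delta, 0 < delta /\
       forall h, 0 < h -> h < Rmin 1 (1 / kappa) -> h < delta ->
         forall n : nat,
           full_norm_diff N d (snd (mt_discrete N d kappa a h (X 0) (V 0) n)) (V (INR n * h))
             <= eps).
Proof.
  intros HN _ Hk Hc1 Hc12 HLa Ha HaL.
  pose proof (beta_bounds c1 c2 Hc1 Hc12) as Hbeta.
  exists (sqrt (INR N * (INR N * INR d)) * (4 / (kappa * beta c1 c2))).
  intros X V Hsol _ _ _. split.
  - intros eps He. exists 1. split; [lra|]. intros h Hh Hmin _ n.
    destruct (lt_Rmin_1_inv h kappa Hk Hmin) as [Hhk _].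
    apply Rle_trans
      with (sqrt (INR N * (INR N * INR d)) * (4 * diam N d (V 0) / (kappa * beta c1 c2))).
    + apply fro_diff_le.
      * apply Rmult_le_pos; [pose proof (diam_nonneg N d (V 0)); lra|].
        apply Rlt_le, Rinv_0_lt_compat; nra.
      * intros i j k Hi Hj Hk'. now apply (xh_X_rel_gap_le N d kappa a c1 c2 La).
    + unfold Rdiv. lra.
  - intros eps He.
    set (s := sqrt (INR N * INR d)). assert (Hs : 0 <= s) by apply sqrt_pos.
    destruct (vh_V_close N d kappa a c1 c2 La HN Hk Hc1 Hc12 HLa Ha HaL X V Hsol (eps / (s + 1)))
      as (delta & Hdelta & Hclose); [apply Rdiv_lt_0_compat; lra|].
    exists delta. split; [exact Hdelta|]. intros h Hh Hmin Hhd n.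
    destruct (lt_Rmin_1_inv h kappa Hk Hmin) as [Hhk Hh1].
    apply Rle_trans with (s * (eps / (s + 1))).
    + apply full_norm_diff_le; [apply Rlt_le, Rdiv_lt_0_compat; lra|].
      intros i k Hi Hk'. now apply Hclose.
    + apply Rmult_le_reg_r with (s + 1); [lra|].
      replace (s * (eps / (s + 1)) * (s + 1)) with (s * eps) by (field; lra). nra.
Qed.
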